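(* Let $x$ and $y$ be indeterminates that do not commute under multiplication (so $(x+y)^n$ is computed in the free associative algebra generated by $x$ and $y$), and let $n$ be a nonnegative integer. For $0\le k\le n$ and each $\lambda=(\lambda_1,\dots,\lambda_k)\in\mathcal{P}_{k,n-k}$, let $Q^\lambda x^{n-k}y^k$ denote the word obtained from the word $x^{n-k}y^k=\underbrace{x\cdots x}_{n-k}\underbrace{y\cdots y}_{k}$ by applying the product of transpositions $$Q^\lambda:=\prod_{j=1}^k (n-k+j,\; n-k+j-\lambda_j),$$ where applying the transposition $(i,j)$ to a word means swapping its $i$th and $j$th letters, and the factors are applied in the order $j=1$ first, then $j=2$, and so on up to $j=k$ (for $k=0$, $Q^\lambda$ is the identity). Then $$(x+y)^n=\sum_{k=0}^n\sum_{\lambda\in\mathcal{P}_{k,n-k}} Q^\lambda x^{n-k}y^k.$$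
   Context: For nonnegative integers $k$ and $m$, $\mathcal{P}_{k,m}$ denotes the set of integer tuples $(\lambda_1,\dots,\lambda_k)$ with $m\ge\lambda_1\ge\lambda_2\ge\cdots\ge\lambda_k\ge 0$, i.e. partitions with at most $k$ parts, each part at most $m$, padded with zeros to length $k$. ($\mathcal{P}_{0,m}$ consists of the single empty tuple.) For example, with $n-k=5$, $k=3$: $Q^{(3,1,0)}x^5y^3=(8,8)(7,6)(6,3)(xxxxxyyy)=xxyxxyxy$. *)

From mathcomp Require Import all_boot all_algebra.
Set Implicit Arguments. Unset Strict Implicit. Unset Printing Implicit Defensive.
Import GRing.Theory.
Local Open Scope ring_scope.

(* Words over the alphabet {x, y}: false = x, true = y. *)
Definition word := seq bool.

Definition xy_word (a b : nat) : word := nseq a false ++ nseq b true.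

(* Swap the letters at 1-based positions i and j of a word. *)
Definition swap_letters (w : word) (i j : nat) : word :=
  [seq nth false w (if l == i.-1 then j.-1 else if l == j.-1 then i.-1 else l)
  | l <- iota 0 (size w)].

Definition Q_apply (n k : nat) (lam : seq nat) : word :=
  foldl (fun w j => swap_letters w (n - k + j) (n - k + j - nth 0 lam j.-1))
        (xy_word (n - k) k) (iota 1 k).

(* Membership in P_{k,m} for a k-tuple with entries in {0..m}:
   m >= lambda_1 >= ... >= lambda_k >= 0. *)
Definition in_P (k m : nat) (t : k.-tuple 'I_m.+1) : bool :=
  sorted (fun a b => b <= a)%N (map val t).

Definition eval_word (R : pzRingType) (x y : R) (w : word) : R :=
  \prod_(b <- w) (if b then y else x).

(* Expanding (x + y)^n yields, for every set A of positions in {0, ..., n-1},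
   the word with y exactly at the positions in A.  For lam in P_{k,n-k}, the
   j-th transposition of Q^lam moves the y at 0-based position n-k+j-1 to
   p_j = n-k+j-1-lam_j.  As lam is nonincreasing, p_1 < ... < p_k, so no
   transposition disturbs a y placed earlier and Q^lam x^(n-k) y^k has its
   y's exactly at {p_1, ..., p_k}.  Conversely a k-set p_1 < ... < p_k of
   positions comes from lam_j = n-k+j-1-p_j, which lies in P_{k,n-k}. *)

From mathcomp Require Import all_boot all_algebra zify.
Import GRing.Theory.
Set Implicit Arguments. Unset Strict Implicit. Unset Printing Implicit Defensive.

Lemma nth_sorted_geq (s : seq nat) i j :
  sorted geq s -> i <= j -> nth 0 s j <= nth 0 s i.
Proof.
move=> s_sorted le_ij; case: (ltnP j (size s)) => [lt_js|]; last first.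
  by move=> le_sj; rewrite nth_default.
have geq_trans : transitive geq by move=> a b c ba ac; apply: leq_trans ac ba.
apply: (sorted_leq_nth geq_trans (@leqnn) 0 s_sorted) => //.
by rewrite inE (leq_ltn_trans le_ij).
Qed.

Lemma sorted_ltn_nthD (s : seq nat) i d :
  sorted ltn s -> i + d < size s -> nth 0 s i + d <= nth 0 s (i + d).
Proof.
move=> /(sortedP 0) s_incr; elim: d => [|d IHd] lt_ids; first by rewrite !addn0.
rewrite addnS in lt_ids *; have := s_incr _ lt_ids; have := IHd (ltnW lt_ids); lia.
Qed.

Lemma nth_val_tuple_le p k (t : k.-tuple 'I_p.+1) i : nth 0 (map val t) i <= p.
Proof.
case: (ltnP i k) => [lt_ik|le_ki]; last by rewrite nth_default // size_map size_tuple.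
rewrite (nth_map ord0) ?size_tuple //; exact: (ltn_ord (nth ord0 t i)).
Qed.

Lemma sorted_val_enum_set n (A : {set 'I_n}) : sorted ltn (map val (enum A)).
Proof.
rewrite /enum_mem -enumT sorted_map; apply: sorted_filter.
  by move=> ? ? ?; apply: ltn_trans.
by rewrite -sorted_map val_enum_ord iota_ltn_sorted.
Qed.

Lemma swap_letters_mkseq (P : pred nat) n a b : a < n -> b < n ->
  swap_letters (mkseq P n) a.+1 b.+1 =
  mkseq (fun l => P (if l == a then b else if l == b then a else l)) n.
Proof.
move=> lt_an lt_bn; rewrite /swap_letters size_mkseq /=.
apply/eq_in_map => l; rewrite mem_iota add0n => lt_ln.
by rewrite nth_mkseq //; case: ifP => _ //; case: ifP.
Qed.

Lemma eval_word_mkseq (R : pzRingType) (x y : R) (P : pred nat) n :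
  eval_word x y (mkseq P n) = (\prod_(l < n) if P l then y else x)%R.
Proof.
rewrite /eval_word big_map -(big_mkord xpredT (fun l => if P l then y else x)).
by rewrite /index_iota subn0.
Qed.

Lemma xy_word_mkseq a b : xy_word a b = mkseq (fun l => a <= l) (a + b).
Proof.
apply: (@eq_from_nth _ false) => [|l]; first by rewrite size_cat !size_nseq size_mkseq.
rewrite size_cat !size_nseq => lt_l_ab; rewrite nth_mkseq // nth_cat size_nseq.
case: ltnP => [_|le_al]; rewrite nth_nseq ?if_same //.
by have -> : l - a < b by lia.
Qed.

(* 0-based: the position to which Q^lam sends the (i+1)-st y of x^m y^k. *)
Definition ypos (m : nat) (lam : seq nat) (i : nat) : nat := m + i - nth 0 lam i.

Lemma yposK m lam k : (forall i, i < k -> nth 0 lam i <= m + i) ->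
  mkseq (ypos m (mkseq (ypos m lam) k)) k = mkseq (nth 0 lam) k.
Proof.
move=> lam_le; apply/eq_in_map => i; rewrite mem_iota add0n => /andP[_ lt_ik] /=.
by rewrite /ypos nth_mkseq //; have := lam_le i lt_ik; lia.
Qed.

Section Ypos.

Variables (m : nat) (lam : seq nat).
Hypotheses (lam_sorted : sorted geq lam) (lam_bounded : forall i, nth 0 lam i <= m).

Lemma ypos_ltn i j : i < j -> ypos m lam i < ypos m lam j.
Proof.
move=> lt_ij; have := nth_sorted_geq lam_sorted (ltnW lt_ij).
by have := lam_bounded i; rewrite /ypos; lia.
Qed.

Lemma ypos_notin i l : ypos m lam i <= l -> l \notin mkseq (ypos m lam) i.
Proof.
move=> le_il; apply/mapP => -[j]; rewrite mem_iota add0n => /andP[_ lt_ji] eq_lj.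
by have := ypos_ltn lt_ji; lia.
Qed.

End Ypos.

Section QWord.

Variables (n k : nat) (lam : seq nat).
Hypotheses (le_kn : k <= n) (lam_sorted : sorted geq lam)
  (lam_bounded : forall i, nth 0 lam i <= n - k).
Local Notation m := (n - k).

(* The word after the first [j] transpositions of [Q_apply n k lam]. *)
Definition Q_step_word j : word :=
  mkseq (fun l => (l \in mkseq (ypos m lam) j) || (m + j <= l)) n.

Lemma Q_step_wordS j : j < k ->
  swap_letters (Q_step_word j) (m + j).+1 (ypos m lam j).+1 = Q_step_word j.+1.
Proof.
move=> lt_jk; have le_yj : ypos m lam j <= m + j by rewrite /ypos; lia.
rewrite /Q_step_word swap_letters_mkseq; [|lia|lia].
apply: eq_mkseq => l; rewrite mkseqS mem_rcons inE.
case: (eqVneq l (m + j)) => [->|ne_lmj].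
  rewrite !(negbTE (ypos_notin lam_sorted lam_bounded _)) //.
  by apply/idP/idP; lia.
case: (eqVneq l (ypos m lam j)) => [->|ne_lyj]; first by rewrite leqnn orbT.
by case: (_ \in _) => //=; apply/idP/idP; lia.
Qed.

Lemma Q_apply_mkseq :
  Q_apply n k lam = mkseq (fun l => l \in mkseq (ypos m lam) k) n.
Proof.
suff foldlE j : j <= k -> foldl (fun w j =>
    swap_letters w (m + j) (m + j - nth 0 lam j.-1)) (xy_word m k) (iota 1 j)
    = Q_step_word j.
  rewrite /Q_apply foldlE //; apply/eq_in_map => l.
  by rewrite mem_iota add0n subnK // => /andP[_ lt_ln] /=; rewrite leqNgt lt_ln orbF.
elim: j => [_|j IHj lt_jk].
  by rewrite /= xy_word_mkseq subnK //; apply: eq_mkseq => l; rewrite addn0.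
rewrite -[j.+1]addn1 iotaD foldl_cat IHj ?(ltnW lt_jk) //= add1n addnS addn1.
have -> : (m + j).+1 - nth 0 lam j = (ypos m lam j).+1.
  by have := lam_bounded j; rewrite /ypos; lia.
exact: Q_step_wordS.
Qed.

End QWord.

Section QSet.

Variables n k : nat.
Hypothesis le_kn : k <= n.
Local Notation m := (n - k).
Implicit Types (t : k.-tuple 'I_m.+1) (A : {set 'I_n}).

Definition Q_set t : {set 'I_n} :=
  [set l : 'I_n | val l \in mkseq (ypos m (map val t)) k].

(* [ypos m] is an involution, so the inverse bijection uses the same formula. *)
Definition Q_tuple A : k.-tuple 'I_m.+1 :=
  [tuple inord (ypos m (map val (enum A)) i) | i < k].

Lemma nth_val_enum_bounds A i : #|A| = k -> i < k ->
  i <= nth 0 (map val (enum A)) i <= m + i.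
Proof.
set s := map val (enum A) => cardA lt_ik.
have size_s : size s = k by rewrite size_map -cardE.
have s_sorted : sorted ltn s := sorted_val_enum_set A.
have := sorted_ltn_nthD (i := 0) (d := i) s_sorted; rewrite add0n size_s => /(_ lt_ik).
have := sorted_ltn_nthD (i := i) (d := k.-1 - i) s_sorted; rewrite size_s.
have -> : i + (k.-1 - i) = k.-1 by lia.
have /mapP[l _ nth_s] : nth 0 s k.-1 \in s by rewrite mem_nth // size_s; lia.
by have := ltn_ord l; rewrite -nth_s; lia.
Qed.

Lemma val_Q_tuple A : #|A| = k ->
  map val (Q_tuple A) = mkseq (ypos m (map val (enum A))) k.
Proof.
move=> cardA; apply: (@eq_from_nth _ 0) => [|i]; rewrite size_map size_tuple.
  by rewrite size_mkseq.
move=> lt_ik.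
rewrite (nth_map ord0) ?size_tuple // (nth_mktuple _ _ (Ordinal lt_ik)) nth_mkseq //.
by rewrite /= inordK //; have := nth_val_enum_bounds cardA lt_ik; rewrite /ypos /=; lia.
Qed.

Lemma in_P_Q_tuple A : #|A| = k -> in_P (Q_tuple A).
Proof.
move=> cardA; rewrite /in_P val_Q_tuple //; apply/(sortedP 0) => i.
rewrite size_mkseq => lt_i1k; rewrite !nth_mkseq ?(ltnW lt_i1k) // /ypos.
have := sorted_ltn_nthD (i := i) (d := 1) (sorted_val_enum_set A).
rewrite size_map -cardE cardA addn1 => /(_ lt_i1k).
have := nth_val_enum_bounds cardA lt_i1k.
by have := nth_val_enum_bounds cardA (ltnW lt_i1k); lia.
Qed.

Lemma Q_tupleK A : #|A| = k -> Q_set (Q_tuple A) = A.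
Proof.
move=> cardA; apply/setP => l; rewrite inE val_Q_tuple // yposK; last first.
  by move=> i /(nth_val_enum_bounds cardA)/andP[].
by rewrite -cardA cardE -(size_map val) mkseq_nth (mem_map val_inj) mem_enum.
Qed.

Section InP.

Variable t : k.-tuple 'I_m.+1.
Hypothesis t_in_P : in_P t.

Lemma val_enum_Q_set : map val (enum (Q_set t)) = mkseq (ypos m (map val t)) k.
Proof.
have ypos_incr := ypos_ltn t_in_P (nth_val_tuple_le t).
apply: (irr_sorted_eq ltn_trans ltnn (sorted_val_enum_set _)).
  apply/(sortedP 0) => i; rewrite size_mkseq => lt_i1k.
  by rewrite !nth_mkseq ?(ltnW lt_i1k) //; apply: ypos_incr.
move=> l; case: (ltnP l n) => [lt_ln|le_nl].
  by rewrite -[l]/(val (Ordinal lt_ln)) (mem_map val_inj) mem_enum inE.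
rewrite (negbTE (ypos_notin t_in_P (nth_val_tuple_le t) _)); last by rewrite /ypos; lia.
by apply/negbTE/mapP => -[l' _ eq_ll']; move: le_nl; rewrite eq_ll' leqNgt ltn_ord.
Qed.

Lemma card_Q_set : #|Q_set t| = k.
Proof. by rewrite cardE -(size_map val) val_enum_Q_set size_mkseq. Qed.

Lemma Q_setK : Q_tuple (Q_set t) = t.
Proof.
apply/val_inj/(inj_map val_inj); rewrite val_Q_tuple ?card_Q_set // val_enum_Q_set.
rewrite yposK; last by move=> i _; have := nth_val_tuple_le t i; lia.
by have := mkseq_nth 0 (map val t); rewrite size_map size_tuple.
Qed.

End InP.

End QSet.

Local Open Scope ring_scope.

Lemma exprD_sum_sets (R : pzRingType) (x y : R) n :
  (x + y) ^+ n = \sum_(A : {set 'I_n}) \prod_(i < n) (if i \in A then y else x).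
Proof.
have -> : (x + y) ^+ n = \prod_(i < n) (y + x).
  by rewrite -(big_mkord xpredT (fun _ => y + x)) prodr_const_nat subn0 addrC.
by rewrite (bigA_distr _ _ (fun _ => y) (fun _ => x)).
Qed.

Lemma big_set_by_card (R : Type) (idx : R) (op : Monoid.com_law idx) (T : finType)
    (F : {set T} -> R) :
  \big[op/idx]_(A : {set T}) F A =
  \big[op/idx]_(k < #|T|.+1) \big[op/idx]_(A : {set T} | #|A| == k) F A.
Proof.
rewrite (partition_big (fun A : {set T} => inord #|A| : 'I_#|T|.+1) xpredT) //.
apply: eq_bigr => k _; apply: eq_bigl => A /=.
have lt_A_T : (#|A| < #|T|.+1)%N by rewrite ltnS max_card.
by apply/eqP/eqP => [<-|->]; [rewrite inordK | rewrite inord_val].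
Qed.

Lemma sum_Q_words (R : pzRingType) (x y : R) n k : (k <= n)%N ->
  \sum_(t : k.-tuple 'I_(n - k).+1 | in_P t) eval_word x y (Q_apply n k (map val t)) =
  \sum_(A : {set 'I_n} | #|A| == k) \prod_(i < n) (if i \in A then y else x).
Proof.
move=> le_kn; rewrite [RHS](reindex_onto (@Q_set n k) (@Q_tuple n k)) => [|A /eqP];
  last exact: Q_tupleK.
apply: eq_big => t.
  apply/idP/andP => [t_in_P | [/eqP card_t /eqP <-]]; last exact: in_P_Q_tuple.
  by rewrite card_Q_set // Q_setK.
move=> t_in_P; rewrite Q_apply_mkseq ?eval_word_mkseq //; last exact: nth_val_tuple_le.
by apply: eq_bigr => i _; rewrite inE.
Qed.

Theorem theorem1 (R : pzRingType) (x y : R) (n : nat) :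
  (x + y) ^+ n =
  \sum_(k < n.+1)
     \sum_(t : k.-tuple 'I_(n - k).+1 | in_P t)
        eval_word x y (Q_apply n k (map val t)).
Proof.
rewrite exprD_sum_sets big_set_by_card card_ord.
by apply: eq_bigr => k _; rewrite sum_Q_words // -ltnS.
Qed.
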